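(* Let $H$ be a uniform hypergraph and let $\mathcal W$ be a monomial walk with $\operatorname{supp}(\mathcal W)\subseteq E(H)$ and $|\mathcal W|=2n$. If $S$ is a proper splitting set of $\mathcal W$, then there exists a decomposition $(\Gamma_1,S,\Gamma_2)$ of $\mathcal W+S$ such that $|\Gamma_1|<|\mathcal W|$ and $|\Gamma_2|<|\mathcal W|$.
   Context: A hypergraph $H$ has vertex set $V=\{1,\dots,n'\}$ and a set $E(H)$ of edges, each a nonempty subset of $V$ (no repeated edges); it is uniform if all edges have the same size. Multisets of edges: $|M|$ is the size counted with multiplicity; $\operatorname{supp}(M)$ is the set of distinct elements; $M_1\sqcup M_2$ adds multiplicities; $M_1\cap M_2$ takes the minimum of multiplicities; $M_2\subseteq M_1$ means each multiplicity in $M_2$ is at most that in $M_1$; $M_2$ is a proper submultiset of $M_1$ if $M_2\subseteq M_1$ and $M_2\neq M_1$. A balanced edge set $\mathcal E$ is a pair of finite multisets $\mathcal E_{blue},\mathcal E_{red}$ of edges (a bicolored multiset) such that every vertex lies in the same number of blue edges as red edges, counted with multiplicity; its underlying multiset is $\mathcal E_{blue}\sqcup\mathcal E_{red}$, $\operatorname{supp}(\mathcal E)$ is the support of this, and $|\mathcal E|=|\mathcal E_{blue}|+|\mathcal E_{red}|$. When $H$ is uniform a balanced edge set is called a monomial walk. A balanced edge set $\mathcal E$ is reducible with separator $S$ and decomposition $(\Gamma_1,S,\Gamma_2)$ if $S$ is a nonempty multiset with $\operatorname{supp}(S)\subseteq\operatorname{supp}(\mathcal E)$, and there are balanced edge sets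 $\Gamma_1\neq\mathcal E$, $\Gamma_2\neq\mathcal E$ such that $S=\Gamma_{1,red}\cap\Gamma_{2,blue}$, the underlying multiset of $\mathcal E$ equals the sum of the underlying multisets of $\Gamma_1$ and $\Gamma_2$, and $\Gamma_{1,red},\Gamma_{2,red}\subseteq\mathcal E_{red}$ and $\Gamma_{1,blue},\Gamma_{2,blue}\subseteq\mathcal E_{blue}$. The separator is proper with respect to $(\Gamma_1,S,\Gamma_2)$ if $S$ is a proper submultiset of both $\Gamma_{1,red}$ and $\Gamma_{2,blue}$. For a balanced edge set $\mathcal E$ and a multiset $S$ of edges of $H$, $\mathcal E+S$ is the balanced edge set with blue part $\mathcal E_{blue}\sqcup S$ and red part $\mathcal E_{red}\sqcup S$. A nonempty multiset $S$ with $\operatorname{supp}(S)\subseteq E(H)$ is a splitting set of $\mathcal E$ with decomposition $(\Gamma_1,S,\Gamma_2)$ if $\mathcal E+S$ is reducible with separator $S$ and decomposition $(\Gamma_1,S,\Gamma_2)$; it is a proper splitting set of $\mathcal E$ if there is such a decomposition of $\mathcal E+S$ with respect to which $S$ is a proper separator. *)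

From mathcomp Require Import all_boot.
Set Implicit Arguments. Unset Strict Implicit. Unset Printing Implicit Defensive.

(* Vertices of a hypergraph are 'I_n' (standing for {1,...,n'}); an edge is a
   subset of vertices, i.e. an element of {set 'I_n'}. *)
Notation edge n' := {set 'I_n'}.

Definition is_hypergraph (n' : nat) (E : {set edge n'}) : Prop :=
  forall e, e \in E -> e != set0.

Definition uniform (n' : nat) (E : {set edge n'}) : Prop :=
  exists k, forall e, e \in E -> #|e| = k.

(* Finite multisets of edges, as multiplicity functions. *)
Definition mset (n' : nat) := {ffun edge n' -> nat}.

Definition msize n' (M : mset n') : nat := \sum_(e : edge n') M e.
Definition msupp n' (M : mset n') : {set edge n'} := [set e | 0 < M e].
Definition madd n' (M1 M2 : mset n') : mset n' := [ffun e => M1 e + M2 e].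
Definition mcap n' (M1 M2 : mset n') : mset n' := [ffun e => minn (M1 e) (M2 e)].
Definition msub n' (M2 M1 : mset n') : Prop := forall e, M2 e <= M1 e.
Definition mproper n' (M2 M1 : mset n') : Prop := msub M2 M1 /\ M2 <> M1.

Record bicolored (n' : nat) := Bicolored { blue : mset n'; red : mset n' }.

Definition underlying n' (G : bicolored n') : mset n' := madd (blue G) (red G).
Definition bsupp n' (G : bicolored n') : {set edge n'} := msupp (underlying G).
Definition bsize n' (G : bicolored n') : nat := msize (blue G) + msize (red G).

Definition balanced n' (G : bicolored n') : Prop :=
  forall v : 'I_n',
    \sum_(e : edge n' | v \in e) blue G e = \sum_(e : edge n' | v \in e) red G e.

Definition monomial_walk n' (E : {set edge n'}) (W : bicolored n') : Prop :=
  uniform E /\ balanced W.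

Definition decomposition n' (Ebs : bicolored n') (G1 : bicolored n') (S : mset n')
    (G2 : bicolored n') : Prop :=
  0 < msize S /\ msupp S \subset bsupp Ebs /\
  balanced G1 /\ balanced G2 /\ G1 <> Ebs /\ G2 <> Ebs /\
  S = mcap (red G1) (blue G2) /\
  underlying Ebs = madd (underlying G1) (underlying G2) /\
  msub (red G1) (red Ebs) /\ msub (red G2) (red Ebs) /\
  msub (blue G1) (blue Ebs) /\ msub (blue G2) (blue Ebs).

Definition proper_separator n' (G1 : bicolored n') (S : mset n') (G2 : bicolored n') : Prop :=
  mproper S (red G1) /\ mproper S (blue G2).

Definition addS n' (G : bicolored n') (S : mset n') : bicolored n' :=
  Bicolored (madd (blue G) S) (madd (red G) S).

Definition proper_splitting_set n' (E : {set edge n'}) (W : bicolored n') (S : mset n') : Prop :=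
  [/\ 0 < msize S, msupp S \subset E &
      exists G1 G2, decomposition (addS W S) G1 S G2 /\ proper_separator G1 S G2].

(* In a uniform hypergraph whose edges all have k > 0 vertices, counting the
   vertex-edge incidences of a balanced edge set in two ways shows that it has
   as many blue as red edges, so its size is twice that of its red part.  In a
   proper decomposition (G1, S, G2) of W + S, the red part of G1 and the blue
   part of G2 strictly contain S, hence |G1|, |G2| > 2|S|; since
   |G1| + |G2| = |W| + 2|S|, both are smaller than |W|. *)
From mathcomp Require Import all_boot.
From mathcomp Require Import zify.
Set Implicit Arguments. Unset Strict Implicit. Unset Printing Implicit Defensive.

Section Multisets.
Variable n' : nat.
Implicit Types M N : mset n'.

Lemma msize_madd M N : msize (madd M N) = msize M + msize N.
Proof. by rewrite /msize -big_split; apply: eq_bigr => e _; rewrite ffunE. Qed.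

Lemma msize_mproper M N : mproper M N -> msize M < msize N.
Proof.
move=> [subMN neqMN].
have [e neq_e] : exists e, M e != N e.
  apply/existsP; apply: contraNT (introN eqP neqMN) => /existsPn eqMN.
  by apply/eqP/ffunP => e; apply/eqP; move: (eqMN e); rewrite negbK.
rewrite /msize (bigD1 e) //= [X in _ < X](bigD1 e) //= -addSn.
rewrite leq_add ?ltn_neqAle ?neq_e ?subMN //.
by apply: leq_sum => i _; apply: subMN.
Qed.

Lemma msize_eq0 M : msupp M = set0 -> msize M = 0.
Proof.
move=> suppM0; apply: big1 => e _; apply/eqP; rewrite -leqn0 leqNgt.
by rewrite -(in_set (fun e => 0 < M e)) -/(msupp M) suppM0 in_set0.
Qed.

Lemma msupp_madd M N : msupp (madd M N) = msupp M :|: msupp N.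
Proof. by apply/setP => e; rewrite !inE ffunE addn_gt0. Qed.

Lemma msupp_msub M N : msub M N -> msupp M \subset msupp N.
Proof. by move=> subMN; apply/subsetP => e; rewrite !inE => /leq_trans; apply. Qed.

Lemma bsize_underlying (G : bicolored n') : bsize G = msize (underlying G).
Proof. by rewrite /bsize /underlying msize_madd. Qed.

Lemma incidence_sum M :
  \sum_(v : 'I_n') \sum_(e : edge n' | v \in e) M e = \sum_(e : edge n') #|e| * M e.
Proof.
rewrite (exchange_big_dep predT) //=; apply: eq_bigr => e _.
by rewrite sum_nat_const.
Qed.

End Multisets.

Section UniformHypergraph.
Variables (n' k : nat) (E : {set edge n'}).
Hypothesis E_hypergraph : is_hypergraph E.
Hypothesis E_uniform : forall e, e \in E -> #|e| = k.

Lemma incidence_sum_uniform (M : mset n') :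
  msupp M \subset E -> \sum_(e : edge n') #|e| * M e = k * msize M.
Proof.
move=> suppM; rewrite /msize big_distrr /=; apply: eq_bigr => e _.
have [-> | Me_gt0] := posnP (M e); first by rewrite !muln0.
by rewrite E_uniform // (subsetP suppM) ?inE.
Qed.

Lemma uniform0_edges_set0 : k = 0 -> E = set0.
Proof.
move=> k0; apply/setP => e; rewrite in_set0; apply/negP => eE.
by move/eqP: (E_uniform eE); rewrite k0 cards_eq0 (negPf (E_hypergraph eE)).
Qed.

Lemma balanced_msize_blue_red (G : bicolored n') :
  balanced G -> msupp (blue G) \subset E -> msupp (red G) \subset E ->
  msize (blue G) = msize (red G).
Proof.
move=> balG suppB suppR.
have [k0 | k_gt0] := posnP k.
  move: suppB suppR; rewrite uniform0_edges_set0 // !subset0 => /eqP B0 /eqP R0.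
  by rewrite !msize_eq0.
apply/eqP; rewrite -(eqn_pmul2l k_gt0) -!incidence_sum_uniform // -!incidence_sum.
by apply/eqP/eq_bigr => v _; apply: balG.
Qed.

End UniformHypergraph.

Theorem lemma3p5 (n' : nat) (E : {set {set 'I_n'}}) (W : bicolored n') (S : mset n') (n : nat) :
  is_hypergraph E -> uniform E ->
  monomial_walk E W -> bsupp W \subset E -> bsize W = 2 * n ->
  proper_splitting_set E W S ->
  exists G1 G2 : bicolored n',
    decomposition (addS W S) G1 S G2 /\ bsize G1 < bsize W /\ bsize G2 < bsize W.
Proof.
move=> hypE [k unifE] _ suppW _ [_ suppS [G1 [G2 [decomp [S_lt1 S_lt2]]]]].
exists G1, G2; split=> //.
move: decomp => [_ [_ [bal1 [bal2 [_ [_ [_ [und [r1 [r2 [b1 b2]]]]]]]]]]].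
have [suppWB suppWR] : msupp (blue W) \subset E /\ msupp (red W) \subset E.
  by apply/andP; rewrite -subUset -msupp_madd.
have in_blue M : msub M (blue (addS W S)) -> msupp M \subset E.
  by move/msupp_msub/subset_trans; apply; rewrite msupp_madd subUset suppWB.
have in_red M : msub M (red (addS W S)) -> msupp M \subset E.
  by move/msupp_msub/subset_trans; apply; rewrite msupp_madd subUset suppWR.
have blue_red1 := balanced_msize_blue_red hypE unifE bal1 (in_blue _ b1) (in_red _ r1).
have blue_red2 := balanced_msize_blue_red hypE unifE bal2 (in_blue _ b2) (in_red _ r2).
have size_sum : bsize G1 + bsize G2 = bsize W + 2 * msize S.
  by rewrite !bsize_underlying -msize_madd -und -bsize_underlying /bsize /= !msize_madd; lia.
move: size_sum (msize_mproper S_lt1) (msize_mproper S_lt2); rewrite /bsize; lia.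
Qed.
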